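(* Every quantifier-free formula in the signature $\{\cup,\cap,\bot,c_0,\min,\max,\mathrm{ips}\}$ is equivalent in the structure $\mathcal{W}(I)$ to a positive existential formula in the same signature.
   Context: Let $I$ be a dense linear order with left endpoint $0$ and no right endpoint. $\mathcal{W}(I)$ is the structure whose universe is the set $\mathcal{P}_{\mathrm{fin}}(I)$ of finite subsets of $I$, interpreted as follows. - $\cup$ and $\cap$ are union and intersection. - $\bot$ is $\emptyset$, and $c_0$ is $\{0\}$. - $\min$ and $\max$ send a nonempty finite set to the singleton of its minimum, respectively maximum, and both fix $\emptyset$. - $\mathrm{ips}$ is the binary function $\mathrm{ips}(A,B)=\{i\in A: s_A(i)\in B\}$, where $s_A$ is the successor function of the finite linear order $A$. A positive existential formula is one built from atomic formulas using only $\wedge$, $\vee$ and $\exists$. *)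

From HB Require Import structures.
From mathcomp Require Import all_boot all_order.
From mathcomp Require Import finmap.
Set Implicit Arguments. Unset Strict Implicit. Unset Printing Implicit Defensive.
Import Order.TTheory.
Local Open Scope order_scope.
Local Open Scope fset_scope.

(* The structure W(I): universe = finite subsets of a totally ordered type I. *)
Section W.
Variables (d : Order.disp_t) (I : orderType d) (c0 : I).

Definition Wmin (A : {fset I}) : {fset I} :=
  [fset i in A | all (fun j => i <= j) A].
Definition Wmax (A : {fset I}) : {fset I} :=
  [fset i in A | all (fun j => j <= i) A].

Definition is_succ_in (A : {fset I}) (i j : I) : bool :=
  [&& j \in A, i < j & ~~ has (fun k => (i < k) && (k < j)) A].

Definition Wips (A B : {fset I}) : {fset I} :=
  [fset i in A | has (fun j => is_succ_in A i j && (j \in B)) A].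

Inductive term : Type :=
| TVar : nat -> term
| TCup : term -> term -> term
| TCap : term -> term -> term
| TBot : term
| TC0 : term
| TMin : term -> term
| TMax : term -> term
| TIps : term -> term -> term.

Fixpoint teval (v : nat -> {fset I}) (t : term) : {fset I} :=
  match t with
  | TVar n => v n
  | TCup t1 t2 => teval v t1 `|` teval v t2
  | TCap t1 t2 => teval v t1 `&` teval v t2
  | TBot => fset0
  | TC0 => [fset c0]
  | TMin t1 => Wmin (teval v t1)
  | TMax t1 => Wmax (teval v t1)
  | TIps t1 t2 => Wips (teval v t1) (teval v t2)
  end.

Inductive qf_formula : Type :=
| QEq : term -> term -> qf_formula
| QNot : qf_formula -> qf_formula
| QAnd : qf_formula -> qf_formula -> qf_formula
| QOr : qf_formula -> qf_formula -> qf_formula.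

Fixpoint qf_sat (v : nat -> {fset I}) (f : qf_formula) : Prop :=
  match f with
  | QEq t1 t2 => teval v t1 = teval v t2
  | QNot f1 => ~ qf_sat v f1
  | QAnd f1 f2 => qf_sat v f1 /\ qf_sat v f2
  | QOr f1 f2 => qf_sat v f1 \/ qf_sat v f2
  end.

Inductive pe_formula : Type :=
| PEq : term -> term -> pe_formula
| PAnd : pe_formula -> pe_formula -> pe_formula
| POr : pe_formula -> pe_formula -> pe_formula
| PEx : nat -> pe_formula -> pe_formula.

Definition upd (v : nat -> {fset I}) (n : nat) (A : {fset I}) : nat -> {fset I} :=
  fun m => if m == n then A else v m.

Fixpoint pe_sat (v : nat -> {fset I}) (f : pe_formula) : Prop :=
  match f with
  | PEq t1 t2 => teval v t1 = teval v t2
  | PAnd f1 f2 => pe_sat v f1 /\ pe_sat v f2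
  | POr f1 f2 => pe_sat v f1 \/ pe_sat v f2
  | PEx n f1 => exists A : {fset I}, pe_sat (upd v n A) f1
  end.

End W.

(** The only obstacle is negation, which can be pushed down to negated
    equations [t1 <> t2].  These say that some nonempty [X] lies in one side
    and misses the other, and nonemptiness is positive existential because
    [c0] is the least element: [X] is nonempty iff [c0 \in X] or the successor
    of [c0] in [{c0} `|` X], namely the minimum of [X], lies in [X]. *)

From mathcomp Require Import all_boot all_order.
From mathcomp Require Import finmap.
Import Order.TTheory.
Local Open Scope order_scope.
Local Open Scope fset_scope.

Lemma seq_has_min {d} {I : orderType d} (s : seq I) :
  s != [::] -> exists2 m, m \in s & all (>= m) s.
Proof.
elim: s => // y s IH _; case: s IH => [|z s] IH.
  by exists y; rewrite ?inE //= lexx.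
have [m ms mmin] := IH isT; case: (leP y m) => [ym|my].
  exists y; first by rewrite inE eqxx.
  apply/allP => k; rewrite inE => /predU1P[->|ks]; first exact: lexx.
  exact: le_trans ym (allP mmin k ks).
exists m; first by rewrite inE ms orbT.
by apply/andP; split; first exact: ltW.
Qed.

Lemma fset_has_min {d} {I : orderType d} (X : {fset I}) :
  X != fset0 -> exists2 m, m \in X & forall k, k \in X -> m <= k.
Proof.
case/fset0Pn=> x xX; have [|m mX /allP mmin] := seq_has_min (enum_fset X).
  by apply/eqP=> sX; rewrite -[x \in X]/(x \in enum_fset X) sX in xX.
by exists m.
Qed.

Lemma fsubsetN_separator (K : choiceType) (A B : {fset K}) :
  (exists X, [/\ X != fset0, X `&` A = X & X `&` B = fset0]) <-> ~~ (A `<=` B).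
Proof.
split=> [[X [X0 /fsetIidPl XA XB]]|AB].
  apply: contra X0 => AB; rewrite -XB; apply/eqP/esym/fsetIidPl.
  exact: fsubset_trans AB.
exists (A `\` B); split; first by rewrite fsetD_eq0.
  by apply/fsetIidPl; apply: fsubsetDl.
by apply/eqP; rewrite fsetI_eq0; apply/fdisjointP => x /fsetDP[].
Qed.

Lemma fset1I_idP (K : choiceType) (x : K) (S : {fset K}) :
  [fset x] `&` S = [fset x] <-> x \in S.
Proof. by rewrite -fsub1set; split=> /fsetIidPl. Qed.

Fixpoint max_var (t : term) : nat :=
  match t with
  | TVar n => n
  | TCup a b | TCap a b | TIps a b => maxn (max_var a) (max_var b)
  | TBot | TC0 => 0
  | TMin a | TMax a => max_var a
  end.

Definition nonempty_pe (X : term) : pe_formula :=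
  POr (PEq (TCap TC0 X) TC0) (PEq (TCap TC0 (TIps (TCup TC0 X) X)) TC0).

Definition separator_pe (X A B : term) : pe_formula :=
  PAnd (nonempty_pe X) (PAnd (PEq (TCap X A) X) (PEq (TCap X B) TBot)).

Definition neq_pe (t1 t2 : term) : pe_formula :=
  let n := (maxn (max_var t1) (max_var t2)).+1 in
  PEx n (POr (separator_pe (TVar n) t1 t2) (separator_pe (TVar n) t2 t1)).

(** [pe_of_qf false f] expresses the negation of [f]. *)
Fixpoint pe_of_qf (b : bool) (f : qf_formula) : pe_formula :=
  match f with
  | QEq t1 t2 => if b then PEq t1 t2 else neq_pe t1 t2
  | QNot f1 => pe_of_qf (~~ b) f1
  | QAnd f1 f2 => (if b then PAnd else POr) (pe_of_qf b f1) (pe_of_qf b f2)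
  | QOr f1 f2 => (if b then POr else PAnd) (pe_of_qf b f1) (pe_of_qf b f2)
  end.

Section Semantics.
Variables (d : Order.disp_t) (I : orderType d) (c0 : I).
Hypothesis c0_least : forall x : I, c0 <= x.

Lemma teval_upd_fresh v n A t :
  (max_var t < n)%N -> teval c0 (upd v n A) t = teval c0 v t.
Proof.
elim: t => //= [m|a IHa b IHb|a IHa b IHb|a IHa|a IHa|a IHa b IHb];
  rewrite ?gtn_max.
- by rewrite /upd; case: eqVneq => // ->; rewrite ltnn.
all: by [move=> /IHa-> | case/andP=> /IHa-> /IHb->].
Qed.

Lemma pe_sat_nonempty v X :
  pe_sat c0 v (nonempty_pe X) <-> teval c0 v X != fset0.
Proof.
rewrite /= !fset1I_idP inE; set S := teval c0 v X.
split=> [[c0S|/andP[_ /hasP[j _ /andP[_ jS]]]]|S0].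
- by apply/fset0Pn; exists c0.
- by apply/fset0Pn; exists j.
have [c0S|c0NS] := boolP (c0 \in S); [by left | right].
have [m mS mmin] := fset_has_min _ S0.
rewrite !inE eqxx /=; apply/hasP; exists m; first by rewrite !inE mS orbT.
rewrite /is_succ_in !inE mS orbT andbT /=.
have c0m : c0 < m by rewrite lt_neqAle c0_least andbT; apply: contraNneq c0NS => ->.
rewrite c0m /=; apply/hasPn => k; rewrite !inE => /predU1P[->|kS].
  by rewrite ltxx.
by rewrite [k < m]ltNge mmin ?andbF.
Qed.

Lemma pe_sat_separator v X A B :
  pe_sat c0 v (separator_pe X A B) <->
  [/\ teval c0 v X != fset0, teval c0 v X `&` teval c0 v A = teval c0 v X
    & teval c0 v X `&` teval c0 v B = fset0].
Proof. by split=> [[/pe_sat_nonempty ? []]|[/pe_sat_nonempty]]. Qed.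

Lemma pe_sat_neq v t1 t2 :
  pe_sat c0 v (neq_pe t1 t2) <-> teval c0 v t1 <> teval c0 v t2.
Proof.
rewrite /neq_pe; set n := (maxn _ _).+1.
have fresh1 : (max_var t1 < n)%N by rewrite ltnS leq_maxl.
have fresh2 : (max_var t2 < n)%N by rewrite ltnS leq_maxr.
have sepE a b : (max_var a < n)%N -> (max_var b < n)%N ->
    (exists A, pe_sat c0 (upd v n A) (separator_pe (TVar n) a b)) <->
    ~~ (teval c0 v a `<=` teval c0 v b).
  move=> an bn; rewrite -fsubsetN_separator.
  have updE A : [/\ teval c0 (upd v n A) (TVar n) = A,
                   teval c0 (upd v n A) a = teval c0 v a
                 & teval c0 (upd v n A) b = teval c0 v b].
    rewrite [teval _ _ a]teval_upd_fresh // [teval _ _ b]teval_upd_fresh //.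
    by rewrite /= /upd eqxx.
  split=> -[A sepA]; exists A; have [XE aE bE] := updE A.
    by move/pe_sat_separator: sepA; rewrite XE aE bE.
  by apply/pe_sat_separator; rewrite XE aE bE.
transitivity ((exists A, pe_sat c0 (upd v n A) (separator_pe (TVar n) t1 t2)) \/
              (exists A, pe_sat c0 (upd v n A) (separator_pe (TVar n) t2 t1))).
  split=> [[A [?|?]]|[[A ?]|[A ?]]];
    by [left; exists A | right; exists A | exists A; left | exists A; right].
rewrite !sepE // (rwP orP) -negb_and -eqEfsubset.
by split=> /eqP.
Qed.

Lemma qf_sat_dec v f : qf_sat c0 v f \/ ~ qf_sat c0 v f.
Proof.
elim: f => /= [t1 t2|f|f IHf g|f IHf g]; try tauto.
by case: (eqVneq (teval c0 v t1) (teval c0 v t2)) => [|/eqP]; [left|right].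
Qed.

Lemma pe_sat_of_qf b v f :
  pe_sat c0 v (pe_of_qf b f) <-> if b then qf_sat c0 v f else ~ qf_sat c0 v f.
Proof.
elim: f b => [t1 t2|f IH|f IHf g IHg|f IHf g IHg] [] /=.
- by [].
- exact: pe_sat_neq.
- by rewrite IH.
- by rewrite IH; have := qf_sat_dec v f; tauto.
- by rewrite IHf IHg.
- by rewrite IHf IHg; have := qf_sat_dec v f; tauto.
- by rewrite IHf IHg.
- by rewrite IHf IHg; tauto.
Qed.
End Semantics.

Theorem proposition3p5 (d : Order.disp_t) (I : orderType d) (c0 : I)
  (c0_least : forall x : I, c0 <= x)
  (dense : forall x y : I, x < y -> exists z : I, x < z /\ z < y)
  (no_max : forall x : I, exists y : I, x < y) :
  forall phi : qf_formula,
    exists psi : pe_formula,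
      forall v : nat -> {fset I}, qf_sat c0 v phi <-> pe_sat c0 v psi.
Proof. by move=> phi; exists (pe_of_qf true phi) => v; rewrite pe_sat_of_qf. Qed.
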